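(* If $(U,\le)$ is an ordered supertropical monoid ($\mathrm{OST}$-monoid), then $U$ is a semiring.
   Context: A supertropical monoid is a commutative monoid $(U,\cdot)$ with absorbing element $0$ and distinguished idempotent $e$ with $ex=0\Rightarrow x=0$, together with a total ordering $\le_M$ on $M:=eU$, compatible with multiplication and with $0$ least, making $M$ a bipotent semiring (addition $=\max$). Define on $U$: $x+y:=y$ if $ex<ey$, $x$ if $ex>ey$, $ex$ if $ex=ey$; $U$ is a semiring if this addition is associative and distributive. An OST-monoid is a supertropical monoid $U$ with a total ordering $\le$ on the set $U$ such that: (OST1) $x\le y\Rightarrow xz\le yz$; (OST2) for $x,y\in M$, $x\le y\Leftrightarrow x\le_M y$; (OST3) $0\le1\le e$. *)

From Stdlib Require Import ClassicalEpsilon.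

Section Supertropical.
Variables (U : Type) (mul : U -> U -> U) (one zero e : U).

(* M := eU ; since e is idempotent, x \in eU iff e x = x *)
Definition inM (x : U) : Prop := exists y, x = mul e y.

Definition total_order_on (P : U -> Prop) (le : U -> U -> Prop) : Prop :=
  (forall x, P x -> le x x) /\
  (forall x y, P x -> P y -> le x y -> le y x -> x = y) /\
  (forall x y z, P x -> P y -> P z -> le x y -> le y z -> le x z) /\
  (forall x y, P x -> P y -> le x y \/ le y x).

Definition is_supertropical_monoid (leM : U -> U -> Prop) : Prop :=
  (forall x y z, mul (mul x y) z = mul x (mul y z)) /\
  (forall x y, mul x y = mul y x) /\
  (forall x, mul one x = x) /\
  (forall x, mul zero x = zero) /\
  mul e e = e /\
  (forall x, mul e x = zero -> x = zero) /\
  total_order_on inM leM /\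
  (forall x y z, inM x -> inM y -> inM z -> leM x y -> leM (mul x z) (mul y z)) /\
  (forall x, inM x -> leM zero x).

Definition ltM (leM : U -> U -> Prop) (x y : U) : Prop := leM x y /\ x <> y.

Definition st_add (leM : U -> U -> Prop) (x y : U) : U :=
  if excluded_middle_informative (ltM leM (mul e x) (mul e y)) then y
  else if excluded_middle_informative (ltM leM (mul e y) (mul e x)) then x
  else mul e x.

Definition is_OST_monoid (leM le : U -> U -> Prop) : Prop :=
  is_supertropical_monoid leM /\
  total_order_on (fun _ => True) le /\
  (forall x y z, le x y -> le (mul x z) (mul y z)) /\
  (forall x y, inM x -> inM y -> (le x y <-> leM x y)) /\
  le zero one /\ le one e.

Definition st_is_semiring (leM : U -> U -> Prop) : Prop :=
  (forall x y z, st_add leM (st_add leM x y) z = st_add leM x (st_add leM y z)) /\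
  (forall x y z, mul x (st_add leM y z) = st_add leM (mul x y) (mul x z)) /\
  (forall x y z, mul (st_add leM x y) z = st_add leM (mul x z) (mul y z)).

End Supertropical.

(** The supertropical sum [x + y] is the summand whose ghost [e x], [e y] is
    strictly larger, and the common ghost otherwise; associativity is then a
    case analysis on the total order of [M].  For distributivity the only
    delicate case is [e y < e z] with [e (x y) = e (x z)], where
    [x (y + z) = x z] must equal the ghost [e (x z)].  Here the order on all of
    [U] helps: [e y <= z] (otherwise [e z <= e y]), so
    [e (x z) = x (e y) <= x z <= e (x z)], the last step by [1 <= e]. *)

From Stdlib Require Import Classical ClassicalEpsilon.

Section SupertropicalSum.
Variables (U : Type) (mul : U -> U -> U) (e : U) (leM : U -> U -> Prop).
Hypothesis mulA : forall x y z, mul (mul x y) z = mul x (mul y z).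
Hypothesis mul_ee : mul e e = e.
Hypothesis leM_total : total_order_on U (inM U mul e) leM.

Local Notation ν := (mul e).
Local Notation M := (inM U mul e).
Local Notation "x <M y" := (ltM U leM x y) (at level 70).
Local Infix "⊕" := (st_add U mul e leM) (at level 50, left associativity).

Lemma inM_ghost (x : U) : M (ν x).
Proof. now exists x. Qed.

Lemma ghost_idem (x : U) : ν (ν x) = ν x.
Proof. now rewrite <- mulA, mul_ee. Qed.

Lemma ltM_irrefl (a : U) : ~ a <M a.
Proof. now intros [_ Hneq]. Qed.

Lemma ltM_nleM (a b : U) : M a -> M b -> a <M b -> ~ leM b a.
Proof.
  destruct leM_total as (_ & leM_anti & _).
  intros Ha Hb [Hab Hneq] Hba; apply Hneq; auto.
Qed.

Lemma ltM_trans (a b c : U) : M a -> M b -> M c -> a <M b -> b <M c -> a <M c.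
Proof.
  destruct leM_total as (_ & leM_anti & leM_trans & _).
  intros Ha Hb Hc [Hab Hneq] [Hbc _]; split; [eauto|].
  intros <-; apply Hneq; auto.
Qed.

Lemma ltM_trichotomy (a b : U) : M a -> M b -> a <M b \/ b <M a \/ a = b.
Proof.
  destruct leM_total as (_ & _ & _ & leM_connex).
  intros Ha Hb; destruct (classic (a = b)) as [Hab | Hab]; [now right; right|].
  destruct (leM_connex a b Ha Hb); [left | right; left]; split; auto.
Qed.

Lemma st_add_ltM (x y : U) : ν x <M ν y -> x ⊕ y = y.
Proof.
  intros Hlt; unfold st_add.
  now destruct (excluded_middle_informative (ν x <M ν y)).
Qed.

Lemma st_add_gtM (x y : U) : ν y <M ν x -> x ⊕ y = x.
Proof.
  intros Hgt; unfold st_add.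
  destruct (excluded_middle_informative (ν x <M ν y)) as [Hlt | _].
  - now destruct (ltM_nleM _ _ (inM_ghost y) (inM_ghost x) Hgt), Hlt.
  - now destruct (excluded_middle_informative (ν y <M ν x)).
Qed.

Lemma st_add_ghost_eq (x y : U) : ν x = ν y -> x ⊕ y = ν x.
Proof.
  intros Heq; unfold st_add; rewrite Heq.
  destruct (excluded_middle_informative (ν y <M ν y)) as [Hlt | _]; [|easy].
  now destruct (ltM_irrefl _ Hlt).
Qed.

Lemma st_addC (x y : U) : x ⊕ y = y ⊕ x.
Proof.
  destruct (ltM_trichotomy (ν x) (ν y) (inM_ghost x) (inM_ghost y)) as [H | [H | H]].
  - now rewrite st_add_ltM, st_add_gtM.
  - now rewrite st_add_gtM, st_add_ltM.
  - now rewrite !st_add_ghost_eq.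
Qed.

Lemma st_addA (x y z : U) : x ⊕ y ⊕ z = x ⊕ (y ⊕ z).
Proof.
  pose proof (inM_ghost x) as Mx; pose proof (inM_ghost y) as My;
    pose proof (inM_ghost z) as Mz.
  destruct (ltM_trichotomy _ _ Mx My) as [Hxy | [Hxy | Hxy]];
  destruct (ltM_trichotomy _ _ My Mz) as [Hyz | [Hyz | Hyz]].
  - rewrite (st_add_ltM x y), (st_add_ltM y z), st_add_ltM; eauto using ltM_trans.
  - now rewrite (st_add_ltM x y), (st_add_gtM y z), (st_add_ltM x y).
  - rewrite (st_add_ltM x y), (st_add_ghost_eq y z), st_add_ltM; auto.
    now rewrite ghost_idem.
  - now rewrite (st_add_gtM x y), (st_add_ltM y z).
  - rewrite (st_add_gtM x y), (st_add_gtM y z), !st_add_gtM; eauto using ltM_trans.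
  - rewrite (st_add_gtM x y), (st_add_ghost_eq y z), !st_add_gtM;
      now rewrite ?ghost_idem, <- ?Hyz.
  - rewrite (st_add_ghost_eq x y), (st_add_ltM y z), !st_add_ltM; auto;
      now rewrite ?ghost_idem, Hxy.
  - rewrite (st_add_ghost_eq x y), (st_add_gtM y z), st_add_gtM;
      rewrite ?ghost_idem, ?Hxy; auto.
    now rewrite st_add_ghost_eq.
  - rewrite (st_add_ghost_eq x y), (st_add_ghost_eq y z), !st_add_ghost_eq;
      now rewrite ?ghost_idem, ?Hxy, ?Hyz.
Qed.

Section Distributivity.
Variables (one : U) (le : U -> U -> Prop).
Hypothesis mulC : forall x y, mul x y = mul y x.
Hypothesis mul1 : forall x, mul one x = x.
Hypothesis le_total : total_order_on U (fun _ => True) le.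
Hypothesis le_mul : forall x y z, le x y -> le (mul x z) (mul y z).
Hypothesis le_leM : forall x y, M x -> M y -> (le x y <-> leM x y).
Hypothesis le_one_e : le one e.

Lemma ghost_mulr (x y : U) : ν (mul x y) = mul x (ν y).
Proof. now rewrite <- mulA, (mulC e x), mulA. Qed.

Lemma le_ghost (x : U) : le x (ν x).
Proof. rewrite <- (mul1 x) at 1; apply le_mul, le_one_e. Qed.

Lemma le_ghost_of_ltM (y z : U) : ν y <M ν z -> le (ν y) z.
Proof.
  destruct le_total as (_ & _ & _ & le_connex).
  intros Hlt; destruct (le_connex (ν y) z I I) as [Hle | Hle]; [easy|].
  apply (le_mul _ _ e) in Hle; rewrite (mulC z), (mulC (ν y)), ghost_idem in Hle.
  apply le_leM in Hle; try apply inM_ghost.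
  now destruct (ltM_nleM _ _ (inM_ghost y) (inM_ghost z) Hlt).
Qed.

Lemma ghost_mul_le_of_ltM (x y z : U) : ν y <M ν z -> le (ν (mul x y)) (mul x z).
Proof.
  intros Hlt; rewrite ghost_mulr, (mulC x), (mulC x z).
  now apply le_mul, le_ghost_of_ltM.
Qed.

Lemma mul_st_add_of_ltM (x y z : U) :
  ν y <M ν z -> mul x (y ⊕ z) = mul x y ⊕ mul x z.
Proof.
  destruct le_total as (_ & le_anti & le_trans & _).
  intros Hlt; rewrite (st_add_ltM y z Hlt).
  pose proof (ghost_mul_le_of_ltM x y z Hlt) as Hle.
  pose proof (le_ghost (mul x z)) as Hxz.
  destruct (ltM_trichotomy (ν (mul x y)) (ν (mul x z)) (inM_ghost _) (inM_ghost _))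
    as [H | [H | H]].
  - now rewrite st_add_ltM.
  - destruct H as [HleM Hneq]; exfalso; apply Hneq.
    apply le_anti; [easy | easy | |].
    + apply le_leM; auto using inM_ghost.
    + apply le_trans with (mul x z); auto.
  - rewrite st_add_ghost_eq, H by exact H; rewrite H in Hle.
    now apply le_anti.
Qed.

Lemma mul_st_addr (x y z : U) : mul x (y ⊕ z) = mul x y ⊕ mul x z.
Proof.
  destruct (ltM_trichotomy (ν y) (ν z) (inM_ghost y) (inM_ghost z)) as [H | [H | H]].
  - now apply mul_st_add_of_ltM.
  - rewrite st_addC, (st_addC (mul x y)); now apply mul_st_add_of_ltM.
  - rewrite (st_add_ghost_eq y z H), st_add_ghost_eq by now rewrite !ghost_mulr, H.
    now rewrite ghost_mulr.
Qed.

Lemma mul_st_addl (x y z : U) : mul (x ⊕ y) z = mul x z ⊕ mul y z.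
Proof. now rewrite !(mulC _ z), mul_st_addr. Qed.

End Distributivity.
End SupertropicalSum.

Theorem theorem61p4 (U : Type) (mul : U -> U -> U) (one zero e : U)
  (leM le : U -> U -> Prop) :
  @is_OST_monoid U mul one zero e leM le ->
  @st_is_semiring U mul e leM.
Proof.
  intros [(mulA & mulC & mul1 & _ & mul_ee & _ & leM_total & _)
          (le_total & le_mul & le_leM & _ & le_one_e)].
  split; [|split]; intros x y z.
  - now apply st_addA.
  - now eapply mul_st_addr; eauto.
  - now eapply mul_st_addl; eauto.
Qed.
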